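(* Let $n,k$ be integers with $2\le 2k\le n-4$, let $\lambda\in\overline{\mathcal{U}}_{T_{n,n-2k}}$, and let $Y=\mathrm{KN}(S_\lambda)$ with hook lengths $h_{i,j}$. Then $h_{i,1}=h_{1,i}$ for every $1\le i\le n-2$.
   Context: A partition of $N$ into distinct parts is a sequence $\lambda=(\lambda_1<\dots<\lambda_t)$ of positive integers with sum $N$ and $t\ge 2$, identified with its set of parts. Missing parts: $\mathcal{M}_\lambda=\{1,\dots,\lambda_t\}\setminus\lambda$. $\lambda$ is refinable if two distinct missing parts sum to a part of $\lambda$, unrefinable otherwise; $\mathcal{U}_N$ is the set of unrefinable partitions of $N$. An element of $\mathcal{U}_N$ is maximal if its largest part is the maximum of the largest parts of elements of $\mathcal{U}_N$; $\widetilde{\mathcal{U}}_N$ is the set of these and $\overline{\mathcal{U}}_N=\{\lambda\in\widetilde{\mathcal{U}}_N:\#\mathcal{M}_\lambda=\lfloor\lambda_t/2\rfloor\}$. $T_n=n(n+1)/2$, $T_{n,d}=T_n-d$. For $\lambda\in\overline{\mathcal{U}}_{T_{n,n-2k}}$ with $2\le 2k\le n-4$ one knows $\lambda_t=2n-5$ and $t=n-2$. $S_\lambda=\mathbb{N}_0\setminus\lambda$. The Keith–Nath transformation sends a set $S\subseteq\mathbb{N}_0$ with $0\in S$ and finite complement to the Young diagram $\mathrm{KN}(S)$ whose boundary is the lattice path that, starting at the origin, takes for $j=0,1,\dots,\max(\mathbb{N}_0\setminus S)$ an east step if $j\in S$ and a north step otherwise. Diagrams are in English convention; $h_{i,j}$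 is the hook length of the cell in row $i$ (from the top) and column $j$ (from the left): (cells to its right in its row) + (cells below it in its column) + 1. *)

From mathcomp Require Import all_boot.
Set Implicit Arguments. Unset Strict Implicit. Unset Printing Implicit Defensive.

Definition T (n : nat) : nat := (n * n.+1)./2.
Definition Tnd (n d : nat) : nat := T n - d.

(* A partition into distinct parts, identified with its set of parts, is
   represented by the strictly increasing sequence lam = [:: l_1; ...; l_t]
   of its (positive) parts. *)
Definition is_dpart (N : nat) (lam : seq nat) : bool :=
  [&& sorted ltn lam, all (fun x => 0 < x) lam, sumn lam == N & 1 < size lam].

Definition largest (lam : seq nat) : nat := last 0 lam.

Definition missing (lam : seq nat) : seq nat :=
  [seq m <- iota 1 (largest lam) | m \notin lam].

Definition refinable (lam : seq nat) : bool :=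
  has (fun a => has (fun b => (a != b) && (a + b \in lam)) (missing lam))
      (missing lam).

Definition unrefinable (N : nat) (lam : seq nat) : bool :=
  is_dpart N lam && ~~ refinable lam.

Definition maximal_unref (N : nat) (lam : seq nat) : Prop :=
  unrefinable N lam /\
  (forall mu : seq nat, unrefinable N mu -> largest mu <= largest lam).

Definition Ubar (N : nat) (lam : seq nat) : Prop :=
  maximal_unref N lam /\ size (missing lam) = (largest lam)./2.

Definition S_of (lam : seq nat) : pred nat := fun j => j \notin lam.

(* Keith--Nath transformation.  For S with 0 \in S and m = max (N_0 \ S),
   the boundary lattice path: for j = 0..m, east step (true) if j \in S,
   north step (false) otherwise. *)
Definition KN_path (S : pred nat) (m : nat) : seq bool :=
  [seq S j | j <- iota 0 m.+1].

(* For each north step (from the bottom), the number of east steps preceding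
   it: this is the length of the row of the Young diagram lying to the
   left of that north step (the diagram is the region north-west of the path,
   between the vertical axis and the path). *)
Fixpoint north_positions (p : seq bool) (e : nat) : seq nat :=
  match p with
  | [::] => [::]
  | b :: p' => if b then north_positions p' e.+1 else e :: north_positions p' e
  end.

(* KN(S) as its sequence of row lengths, rows listed from the top
   (English convention). *)
Definition KN (S : pred nat) (m : nat) : seq nat :=
  rev (north_positions (KN_path S m) 0).

(* Hook length of cell (i, j) (1-indexed: row i from the top, column j from
   the left) of the Young diagram with row lengths Y (top to bottom):
   arm (cells to the right) + leg (cells below) + 1. *)
Definition hook (Y : seq nat) (i j : nat) : nat :=
  (nth 0 Y i.-1 - j) + count (fun r => j <= r) (drop i Y) + 1.

(* Comparing with an explicit unrefinable partition gives lambda_t >= 2n - 5.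
   As no two distinct missing parts sum to m = lambda_t, the fold
   x |-> min(x, m - x) is injective on the floor(m/2) missing parts, hence onto
   {1, ..., floor(m/2)}: for 0 < u < m exactly one of u, m - u is a part, and
   m/2 is missing when m is even.  For even m this fixes the sum of lambda from
   below and modulo 2 in a way incompatible with N = T_{n,n-2k}, so m is odd
   and {0, ..., m} \ lambda = m - lambda.  Then the row of KN(S_lambda) coming
   from the part x has length #{z in lambda | x + z > m}; this is symmetric in
   x and z, so the diagram is self-conjugate, and a self-conjugate diagram has
   h_{i,1} = h_{1,i}. *)

From mathcomp Require Import all_boot zify.
Set Implicit Arguments. Unset Strict Implicit. Unset Printing Implicit Defensive.

Definition self_conjugate (Y : seq nat) : Prop :=
  forall j, 0 < j -> count (fun r => j <= r) Y = nth 0 Y j.-1.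

Lemma hook_col1_row1_self_conjugate (Y : seq nat) :
  all (fun r => 0 < r) Y -> self_conjugate Y ->
  forall i, 0 < i -> hook Y i 1 = hook Y 1 i.
Proof.
case: Y => [|y0 Y] Ypos Yconj i i_gt0; first by rewrite /hook !nth_nil.
have count_pos s : all (fun r => 0 < r) s -> count (fun r => 1 <= r) s = size s.
  by rewrite all_count => /eqP.
have y0_size : y0 = (size Y).+1 by have := Yconj 1 isT; rewrite count_pos //= => ->.
have /= col_i := Yconj i i_gt0.
rewrite /hook /= drop0 count_pos; last by apply/allP => r /mem_drop; apply: (allP Ypos).
case: (leqP i y0) => [i_le | i_gt] in col_i *.
- have : 0 < nth 0 (y0 :: Y) i.-1 by apply/(all_nthP 0) => //=; lia.
  rewrite size_drop /=; lia.
- (* past the last row both hooks are the junk value 1 *)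
  rewrite nth_default /= in col_i *; last lia.
  rewrite size_drop /=; lia.
Qed.

Definition pair_sum_rows (c : nat) (D : seq nat) : seq nat :=
  [seq count (fun z => c < x + z) D | x <- D].

Lemma leq_count_gt_nth (D : seq nat) (a j : nat) : sorted gtn D -> 0 < j ->
  (j <= count (fun z => a < z) D) = (a < nth 0 D j.-1).
Proof.
elim: D j => [|d D IH] [|j] //= D_sorted _; first by rewrite nth_nil.
have D_lt_d : all (fun z => z < d) D.
  by apply: order_path_min D_sorted => x y z /= yx zy; apply: ltn_trans zy yx.
have count_D : a < d \/ count (fun z => a < z) D = 0.
  case: (ltnP a d) => [|d_le_a]; [by left | right].
  apply/eqP; rewrite -leqn0 leqNgt -has_count; apply/hasPn => z /(allP D_lt_d) z_lt.
  by rewrite -leqNgt (leq_trans (ltnW z_lt)).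
case: j => [|j] /=.
  by case: count_D => [-> | ->]; rewrite ?addn0 ?lt0b.
rewrite -(IH j.+1) ?(path_sorted D_sorted) //.
by case: count_D => [-> | ->]; rewrite ?add1n ?addn0 ?ltnS //; case: (a < d).
Qed.

Lemma pair_sum_rows_self_conjugate (c : nat) (D : seq nat) :
  sorted gtn D -> all (fun x => x <= c) D -> self_conjugate (pair_sum_rows c D).
Proof.
move=> D_sorted D_le j j_gt0; rewrite count_map.
have count_shift x : x <= c ->
    count (fun z => c < x + z) D = count (fun z => c - x < z) D.
  by move=> x_le; apply: eq_count => z /=; rewrite ltn_subLR.
rewrite (eq_in_count (a2 := fun x => c < x + nth 0 D j.-1)); last first.
  move=> x /(allP D_le) x_le /=.
  by rewrite count_shift // leq_count_gt_nth // ltn_subLR.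
case: (ltnP j.-1 (size D)) => [j_lt | j_ge].
  by rewrite (nth_map 0) //; apply: eq_count => x /=; rewrite addnC.
rewrite !nth_default ?size_map //; apply/eqP; rewrite -leqn0 leqNgt -has_count.
by apply/hasPn => x /(allP D_le) x_le; rewrite addn0 -leqNgt.
Qed.

Lemma pair_sum_rows_pos (c : nat) (D : seq nat) :
  c \in D -> all (fun x => 0 < x) D -> all (fun r => 0 < r) (pair_sum_rows c D).
Proof.
move=> c_in D_pos; apply/allP => _ /mapP[x x_in ->].
by rewrite -has_count; apply/hasP; exists c; rewrite // -{1}[c]add0n ltn_add2r (allP D_pos).
Qed.

Lemma north_positions_iota (P : pred nat) (a len e : nat) :
  north_positions [seq P j | j <- iota a len] e =
  [seq e + count P (iota a (j - a)) | j <- [seq j <- iota a len | ~~ P j]].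
Proof.
elim: len a e => [|len IH] a e //=.
have count_step j : a < j ->
    count P (iota a (j - a)) = P a + count P (iota a.+1 (j - a.+1)).
  by move=> a_lt_j; rewrite -subnSK.
case P_a: (P a) => /=; rewrite IH ?subnn ?addn0; [|congr (_ :: _)];
  apply/eq_in_map => j; rewrite mem_filter mem_iota => /and3P[_ a_lt_j _];
  by rewrite count_step // P_a ?add1n ?addSnnS.
Qed.

Lemma leq_largest (lam : seq nat) (x : nat) :
  sorted ltn lam -> x \in lam -> x <= largest lam.
Proof.
case: lam => [|a s] //; rewrite /largest /=.
elim: s a x => [|b s IH] a x /=; first by move=> _; rewrite inE => /eqP ->.
case/andP=> a_lt_b b_s; rewrite inE => /predU1P[->|]; last exact: IH.
exact: leq_trans (ltnW a_lt_b) (IH b b b_s (mem_head _ _)).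
Qed.

Lemma largest_mem (lam : seq nat) : lam != [::] -> largest lam \in lam.
Proof. by case: lam => // a s _; apply: mem_last. Qed.

Lemma KN_S_of (lam : seq nat) : sorted ltn lam -> all (fun x => 0 < x) lam ->
  KN (S_of lam) (largest lam) =
  rev [seq count (fun y => y \notin lam) (iota 0 x) | x <- lam].
Proof.
move=> lam_sorted lam_pos; rewrite /KN /KN_path north_positions_iota.
have -> : [seq j <- iota 0 (largest lam).+1 | ~~ S_of lam j] = lam.
  apply: (irr_sorted_eq ltn_trans ltnn) => //.
    by apply: sorted_filter; [exact: ltn_trans | exact: iota_ltn_sorted].
  move=> y; rewrite mem_filter mem_iota /S_of negbK add0n ltnS.
  by apply/andP/idP => [[] // | y_in]; rewrite y_in leq_largest.
by apply: congr1; apply/eq_map => x; rewrite subn0.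
Qed.

Lemma count_mem_seqC (T : eqType) (s t : seq T) :
  uniq s -> uniq t -> count (mem s) t = count (mem t) s.
Proof.
move=> s_uniq t_uniq; rewrite -!size_filter; apply/perm_size/uniq_perm;
  by rewrite ?filter_uniq // => x; rewrite !mem_filter andbC.
Qed.

Definition self_complementary (m : nat) (lam : seq nat) : Prop :=
  forall u, u <= m -> (m - u \in lam) = (u \notin lam).

Lemma count_notin_iota_self_complementary (m : nat) (lam : seq nat) (x : nat) :
  uniq lam -> {in lam, forall y, y <= m} -> self_complementary m lam -> x <= m ->
  count (fun y => y \notin lam) (iota 0 x) = count (fun z => m < x + z) lam.
Proof.
move=> lam_uniq lam_le lam_sc x_le.
have -> : count (fun y => y \notin lam) (iota 0 x) =
          count (mem lam) [seq m - y | y <- iota 0 x].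
  rewrite count_map; apply: eq_in_count => y; rewrite mem_iota => y_lt /=.
  by rewrite lam_sc //; lia.
rewrite count_mem_seqC //; last first.
  by rewrite map_inj_in_uniq ?iota_uniq // => y1 y2; rewrite !mem_iota; lia.
apply: eq_in_count => z /lam_le z_le /=.
apply/mapP/idP => [[y] | lt_sum]; first by rewrite mem_iota => y_lt ->; lia.
by exists (m - z); rewrite ?mem_iota; lia.
Qed.

Lemma hook_KN_self_complementary (lam : seq nat) :
  sorted ltn lam -> all (fun x => 0 < x) lam -> lam != [::] ->
  self_complementary (largest lam) lam ->
  forall i, 0 < i ->
    hook (KN (S_of lam) (largest lam)) i 1 = hook (KN (S_of lam) (largest lam)) 1 i.
Proof.
move=> lam_sorted lam_pos lam_nil lam_sc.
have -> : KN (S_of lam) (largest lam) = pair_sum_rows (largest lam) (rev lam).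
  rewrite KN_S_of // /pair_sum_rows map_rev; apply: congr1; apply/eq_in_map => x x_in.
  rewrite count_rev (count_notin_iota_self_complementary _ _ lam_sc) ?leq_largest //.
    exact: (sorted_uniq ltn_trans ltnn lam_sorted).
  by move=> y; apply: leq_largest.
apply: hook_col1_row1_self_conjugate.
  by apply: pair_sum_rows_pos; rewrite ?mem_rev ?all_rev ?largest_mem.
apply: pair_sum_rows_self_conjugate; first by rewrite rev_sorted.
by rewrite all_rev; apply/allP => x; apply: leq_largest.
Qed.

Lemma mem_missing (lam : seq nat) (x : nat) :
  (x \in missing lam) = (0 < x <= largest lam) && (x \notin lam).
Proof. by rewrite /missing mem_filter mem_iota add1n ltnS andbC. Qed.

Lemma unrefinableP (lam : seq nat) :
  reflect (forall a b, a != b -> a \in missing lam -> b \in missing lam -> a + b \notin lam)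
          (~~ refinable lam).
Proof.
apply: (iffP hasPn) => [no_sum a b a_neq_b a_miss b_miss | no_sum a a_miss].
  by move/hasPn/(_ b b_miss): (no_sum a a_miss); rewrite a_neq_b.
apply/hasPn => b b_miss; have [// | a_neq_b] := eqVneq a b.
by rewrite no_sum.
Qed.

Section HalfMissingUnrefinable.

Variable lam : seq nat.
Hypotheses (lam_sorted : sorted ltn lam) (lam_pos : all (fun x => 0 < x) lam).
Hypotheses (lam_nil : lam != [::]) (lam_unref : ~~ refinable lam).
Hypothesis missing_half : size (missing lam) = (largest lam)./2.

Local Notation m := (largest lam).

Let m_in : m \in lam. Proof. exact: largest_mem. Qed.

Lemma missing_or_mirror_missing (y : nat) :
  0 < y -> y.*2 <= m -> (y \notin lam) || (m - y \notin lam).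
Proof.
have miss_lt x : x \in missing lam -> 0 < x < m.
  rewrite mem_missing => /andP[/andP[x_gt0 x_le] x_out].
  by rewrite x_gt0 ltn_neqAle x_le andbT; apply: contraNneq x_out => ->.
pose fold x := minn x (m - x).
have fold_uniq : uniq [seq fold x | x <- missing lam].
  rewrite map_inj_in_uniq ?filter_uniq ?iota_uniq // => x1 x2 x1_miss x2_miss.
  move: (miss_lt _ x1_miss) (miss_lt _ x2_miss) => x1_lt x2_lt fold12.
  apply/eqP; apply: contraTT m_in => x12.
  have -> : m = x1 + x2 by move: fold12; rewrite /fold; lia.
  by move/unrefinableP: lam_unref; apply.
have fold_sub : {subset [seq fold x | x <- missing lam] <= iota 1 m./2}.
  by move=> _ /mapP[x /miss_lt x_lt ->]; rewrite mem_iota /fold; lia.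
have fold_size : size (iota 1 m./2) <= size [seq fold x | x <- missing lam].
  by rewrite size_map size_iota missing_half.
have [_ fold_eq] := uniq_min_size fold_uniq fold_sub fold_size.
move=> y_gt0 y_le.
have /mapP[x x_miss y_fold] : y \in [seq fold x | x <- missing lam].
  by rewrite fold_eq mem_iota; lia.
have := x_miss; rewrite mem_missing => /andP[_ x_out].
have [<- | <-] : x = y \/ x = m - y by move: y_fold; rewrite /fold; lia.
  by rewrite x_out.
by rewrite x_out orbT.
Qed.

Let lam_range y : y \in lam -> 0 < y <= m.
Proof. by move=> y_in; rewrite (allP lam_pos) ?leq_largest. Qed.

Lemma mirror_mem (y : nat) :
  0 < y < m -> y.*2 != m -> (m - y \in lam) = (y \notin lam).
Proof.
move=> y_range y_half.
have not_both : ~~ ((y \notin lam) && (m - y \notin lam)).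
  apply/negP => /andP[y_out my_out].
  have y_neq : y != m - y by apply: contra y_half => /eqP y_eq; apply/eqP; lia.
  have y_miss : y \in missing lam by rewrite mem_missing y_out andbT; lia.
  have my_miss : m - y \in missing lam by rewrite mem_missing my_out andbT; lia.
  have /unrefinableP/(_ _ _ y_neq y_miss my_miss) := lam_unref.
  by rewrite subnKC ?m_in //; lia.
have one_of : (y \notin lam) || (m - y \notin lam).
  case: (leqP y.*2 m) => [y_le | y_gt]; first by apply: missing_or_mirror_missing; lia.
  rewrite orbC -{2}(@subKn y m); last lia.
  by apply: missing_or_mirror_missing; lia.
by move: not_both one_of; case: (y \in lam); case: (m - y \in lam).
Qed.

Lemma self_complementary_odd : odd m -> self_complementary m lam.
Proof.
move=> m_odd u u_le.
have zero_out : 0 \notin lam by apply/negP => /lam_range.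
have [-> | u_gt0] := posnP u; first by rewrite subn0 m_in.
have [-> | u_neq] := eqVneq u m; first by rewrite subnn (negbTE zero_out) m_in.
by rewrite mirror_mem; [| lia | apply: contraTneq m_odd => <-; rewrite odd_double].
Qed.

Lemma half_largest_notin (q : nat) : m = q.*2 -> q \notin lam.
Proof.
move=> m_q; have q_gt0 : 0 < q by have := lam_range m_in; lia.
have := missing_or_mirror_missing q_gt0; rewrite m_q leqnn -addnn addnK orbb.
by apply.
Qed.

Lemma perm_fold_largest (q : nat) :
  m = q.*2 -> perm_eq [seq minn y (m - y) | y <- lam & y != m] (iota 1 q.-1).
Proof.
move=> m_q; have q_out := half_largest_notin m_q.
have lam'_range y : y \in [seq y <- lam | y != m] -> [/\ 0 < y < m, y.*2 != m & y \in lam].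
  rewrite mem_filter => /andP[y_neq y_in]; have := lam_range y_in.
  split=> //; first lia.
  by apply: contraNneq q_out => y_half; have -> : q = y by lia.
apply: uniq_perm; rewrite ?iota_uniq //.
  rewrite map_inj_in_uniq ?filter_uniq ?(sorted_uniq ltn_trans ltnn) //.
  move=> y1 y2 /lam'_range[y1_range y1_half y1_in] /lam'_range[y2_range _ y2_in] fold12.
  apply/eqP; apply: contraTT y2_in => y12.
  have -> : y2 = m - y1 by lia.
  by rewrite mirror_mem // y1_in.
move=> z; rewrite mem_iota; apply/mapP/idP => [[y /lam'_range[y_range y_half _] ->] | z_range].
  by lia.
have z_range' : 0 < z < m by lia.
case z_in: (z \in lam).
  by exists z; rewrite ?mem_filter ?z_in; [apply/andP; split=> //; lia | lia].
exists (m - z); last lia.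
by rewrite mem_filter mirror_mem ?z_in //; [apply/andP; split=> //; lia | lia].
Qed.

Lemma sumn_even_largest (q : nat) :
  m = q.*2 -> exists Z, sumn lam = q.*2 + 'C(q, 2) + 2 * Z.
Proof.
move=> m_q; have q_gt0 : 0 < q by have := lam_range m_in; lia.
have sum_fold : \sum_(y <- lam | y != m) minn y (m - y) = 'C(q, 2).
  rewrite -big_filter -(big_map (fun y => minn y (m - y)) predT id).
  rewrite (perm_big _ (perm_fold_largest m_q)) -bin2_sum.
  by rewrite (big_ltn q_gt0) /index_iota subn1.
exists (\sum_(y <- lam | y != m) (y - q)).
rewrite sumnE (bigD1_seq m) ?(sorted_uniq ltn_trans ltnn) //= -m_q -sum_fold.
rewrite big_distrr -addnA -big_split /=; congr (_ + _).
rewrite big_seq_cond [RHS]big_seq_cond; apply: eq_bigr => y /andP[y_in _].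
by have := lam_range y_in; lia.
Qed.

End HalfMissingUnrefinable.

Lemma double_T (n : nat) : (T n).*2 = n * n.+1.
Proof. by rewrite /T -[RHS]even_halfK // oddM /= andbN. Qed.

Lemma double_bin2 (q : nat) : 'C(q, 2).*2 = q * q.-1.
Proof. by rewrite bin2 -[RHS]even_halfK // oddM; case: q => //= q; rewrite andNb. Qed.

Lemma Tnd_neq_even_largest_sum (n k q Z : nat) :
  0 < k -> 2 * k <= n - 4 -> 2 * n - 5 <= q.*2 ->
  Tnd n (n - 2 * k) != q.*2 + 'C(q, 2) + 2 * Z.
Proof.
move=> k_gt0 k_le q_ge; apply/eqP; rewrite /Tnd.
(* for q = n - 2 the two sides have different parity (they differ by
   2k + 1 - 2Z); for larger q the right-hand side is too big *)
have := double_T n; have := double_bin2 q.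
have [-> | q_gt] : q = n - 2 \/ n - 1 <= q by lia.
  have -> : (n - 2).-1 = n - 3 by lia.
  nia.
nia.
Qed.

Lemma sumn_iota (a b : nat) : (sumn (iota a b)).*2 + b = b * (a.*2 + b).
Proof. by elim: b a => [|b IH] a //=; have := IH a.+1; rewrite doubleD; nia. Qed.

Lemma sorted_ltn_cat (s1 s2 : seq nat) :
  sorted ltn s1 -> sorted ltn s2 -> {in s1 & s2, forall x y, x < y} ->
  sorted ltn (s1 ++ s2).
Proof.
rewrite !(sorted_pairwise ltn_trans) pairwise_cat => -> -> s12.
by rewrite !andbT; apply/allrelP.
Qed.

Lemma unrefinable_tight (p : nat) :
  unrefinable (Tnd (p + 6) 4) (iota 1 (p + 4) ++ [:: 2 * p + 7]).
Proof.
have largest_eq : largest (iota 1 (p + 4) ++ [:: 2 * p + 7]) = 2 * p + 7.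
  by rewrite /largest last_cat.
apply/andP; split; last first.
  apply/unrefinableP => a b; rewrite !mem_missing largest_eq !mem_cat !mem_iota !inE; lia.
apply/and4P; split.
- apply: sorted_ltn_cat; rewrite ?iota_ltn_sorted // => x y; rewrite mem_iota inE; lia.
- rewrite all_cat /=; apply/and3P; split=> //; last lia.
  by apply/allP => x; rewrite mem_iota; lia.
- rewrite sumn_cat /= /Tnd; apply/eqP.
  have := sumn_iota 1 (p + 4); have := double_T (p + 6); nia.
- by rewrite size_cat size_iota /=; lia.
Qed.

(* With n = a + c + 5 and k = c + 1 this is {1, ..., n - 3} with n - 3 - k and
   n - 3 replaced by their mirror images n - 2 + k and n - 2 about (2n - 5)/2,
   together with 2n - 5. *)
Lemma unrefinable_spread (a c : nat) : c.+1 < a ->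
  unrefinable (Tnd (a + c + 5) (a - c + 3))
    (iota 1 a ++ iota (a + 2) c ++ [:: a + c + 3; a + 2 * c + 4; 2 * (a + c) + 5]).
Proof.
move=> c_lt; set lam := _ ++ _.
have largest_eq : largest lam = 2 * (a + c) + 5 by rewrite /largest !last_cat.
apply/andP; split; last first.
  apply/unrefinableP => x y; rewrite !mem_missing largest_eq !mem_cat !mem_iota !inE; lia.
apply/and4P; split.
- apply: sorted_ltn_cat; rewrite ?iota_ltn_sorted //; last first.
    by move=> x y; rewrite mem_iota mem_cat mem_iota !inE; lia.
  apply: sorted_ltn_cat; rewrite ?iota_ltn_sorted //=; last first.
    by move=> x y; rewrite mem_iota !inE; lia.
  by apply/and3P; split=> //; lia.
- rewrite !all_cat /=; apply/and5P; split=> //; try lia;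
    by apply/allP => x; rewrite mem_iota; lia.
- rewrite !sumn_cat /= /Tnd; apply/eqP.
  have := sumn_iota 1 a; have := sumn_iota (a + 2) c; have := double_T (a + c + 5).
  have : a * (1.*2 + a) = a * a + 2 * a by nia.
  have : c * ((a + 2).*2 + c) = c * c + 2 * (a * c) + 4 * c by nia.
  have : (a + c + 5) * (a + c + 5).+1 = a * a + 2 * (a * c) + c * c + 11 * a + 11 * c + 30.
    by nia.
  lia.
- by rewrite !size_cat !size_iota /=; lia.
Qed.

Lemma exists_unrefinable_large (n k : nat) : 0 < k -> 2 * k <= n - 4 ->
  exists2 mu, unrefinable (Tnd n (n - 2 * k)) mu & 2 * n - 5 <= largest mu.
Proof.
move=> k_gt0 k_le.
(* for 2k = n - 4 the witness of unrefinable_spread is refinable, as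
   (n - 3 - k) + (n - 3) = n - 2 + k *)
have [k_tight | k_lt] : 2 * k = n - 4 \/ 2 * k < n - 4 by lia.
  have [p n_eq] : exists p, n = p + 6 by exists (n - 6); lia.
  have -> : n - 2 * k = 4 by lia.
  subst n; exists (iota 1 (p + 4) ++ [:: 2 * p + 7]); first exact: unrefinable_tight.
  by rewrite /largest last_cat /=; lia.
have [a [c [n_eq k_eq]]] : exists a c, n = a + c + 5 /\ k = c.+1.
  by exists (n - k - 4), k.-1; lia.
have -> : n - 2 * k = a - c + 3 by lia.
subst n; exists (iota 1 a ++ iota (a + 2) c ++ [:: a + c + 3; a + 2 * c + 4; 2 * (a + c) + 5]).
  by apply: unrefinable_spread; lia.
by rewrite /largest !last_cat /=; lia.
Qed.

Theorem lemma4p3 (n k : nat) (lam : seq nat) :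
  2 <= 2 * k -> 2 * k <= n - 4 ->
  Ubar (Tnd n (n - 2 * k)) lam ->
  forall i : nat, 1 <= i <= n - 2 ->
    hook (KN (S_of lam) (largest lam)) i 1 =
    hook (KN (S_of lam) (largest lam)) 1 i.
Proof.
move=> k_ge k_le [[lam_unref lam_max] missing_half] i /andP[i_gt0 _].
have /andP[/and4P[lam_sorted lam_pos /eqP lam_sum lam_size] lam_nref] := lam_unref.
have lam_nil : lam != [::] by case: (lam) lam_size.
have k_gt0 : 0 < k by lia.
have [mu mu_unref mu_large] := exists_unrefinable_large k_gt0 k_le.
have lam_large := leq_trans mu_large (lam_max mu mu_unref).
have largest_odd : odd (largest lam).
  apply: contraT => /even_halfK largest_half.
  have [Z lam_sum_eq] := sumn_even_largest lam_sorted lam_pos lam_nil lam_nref missing_half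
    (esym largest_half).
  have half_large : 2 * n - 5 <= (largest lam)./2.*2 by rewrite largest_half.
  by move: (Tnd_neq_even_largest_sum Z k_gt0 k_le half_large); rewrite -lam_sum lam_sum_eq eqxx.
apply: hook_KN_self_complementary => //.
exact: self_complementary_odd.
Qed.
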